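(* Let $G$ be a connected finite simple graph on $n$ vertices, and let $m$ be the maximum multiplicity of the nonzero eigenvalues of the Laplacian matrix $L_G=D_G-A_G$. Then $\mathrm{mur}(G)\le n-m-1$.
   Context: For a finite simple undirected graph $G$ on vertices $v_1,\dots,v_n$, let $A_G$ be its $(0,1)$-adjacency matrix, $D_G=\mathrm{diag}(d_1,\dots,d_n)$ with $d_i$ the degree of $v_i$, $I$ the $n\times n$ identity matrix and $J$ the $n\times n$ all-ones matrix. A universal adjacency matrix of $G$ is any matrix $\alpha A_G+\beta I+\gamma J+\delta D_G$ with real scalars $\alpha,\beta,\gamma,\delta$ and $\alpha\neq 0$. The minimum universal rank $\mathrm{mur}(G)$ is the minimum rank over all universal adjacency matrices of $G$. *)

From HB Require Import structures.
From mathcomp Require Import all_boot all_order all_algebra.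
From mathcomp Require Import boolp reals.
Set Implicit Arguments. Unset Strict Implicit. Unset Printing Implicit Defensive.
Import Order.TTheory GRing.Theory Num.Theory.
Local Open Scope ring_scope.

Definition simple_graph (n : nat) (e : rel 'I_n) : Prop :=
  irreflexive e /\ symmetric e.

Definition connected_graph (n : nat) (e : rel 'I_n) : Prop :=
  forall i j : 'I_n, connect e i j.

Section Mats.
Variables (R : realType) (n : nat) (e : rel 'I_n).

Definition adjmx : 'M[R]_n := \matrix_(i, j) (e i j)%:R.

Definition deg (i : 'I_n) : nat := #|[pred k | e i k]|.

Definition degmx : 'M[R]_n := \matrix_(i, j) ((i == j)%:R * (deg i)%:R).

Definition laplacian : 'M[R]_n := degmx - adjmx.

Definition univmx (a b c d : R) : 'M[R]_n :=
  a *: adjmx + b%:M + c *: const_mx 1 + d *: degmx.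

Definition univ_rank_pred (k : nat) : bool :=
  `[< exists a b c d : R, a != 0 /\ \rank (univmx a b c d) = k >].

Lemma univ_rank_ex : exists k, univ_rank_pred k.
Proof.
exists (\rank (univmx 1 0 0 0)); apply/asboolP.
by exists 1, 0, 0, 0; split => //; exact: oner_neq0.
Qed.

Definition mur : nat := ex_minn univ_rank_ex.

End Mats.

(* Let lam != 0 be a Laplacian eigenvalue with eigenspace E. Since L is real
   symmetric, ker (L - lam) meets im (L - lam) trivially, so L is similar to
   a block matrix diag(lam I, C) with lam not an eigenvalue of C, and the
   algebraic multiplicity of lam equals dim E. As L 1 = 0 and 1^T L = 0, the
   eigenvectors for lam are orthogonal to 1, so the universal adjacency matrix
   L - lam I + (lam / n) J kills both E and 1: its rank is at most n - dim E - 1. *)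

From HB Require Import structures.
From mathcomp Require Import all_boot all_order all_algebra.
From mathcomp Require Import boolp reals.
From mathcomp Require Import zify.
Set Implicit Arguments. Unset Strict Implicit. Unset Printing Implicit Defensive.

Import Order.TTheory GRing.Theory Num.Theory.
Local Open Scope ring_scope.

Lemma char_poly_similar (F : fieldType) n (P A : 'M[F]_n) : P \in unitmx ->
  char_poly (invmx P *m A *m P) = char_poly A.
Proof.
move=> Punit; set Pc := map_mx polyC P.
have PcVPc : map_mx polyC (invmx P) *m Pc = 1%:M by rewrite -map_mxM mulVmx ?map_mx1.
rewrite /char_poly.
have -> : char_poly_mx (invmx P *m A *m P) =
          map_mx polyC (invmx P) *m char_poly_mx A *m Pc.
  rewrite /char_poly_mx mulmxBr mulmxBl !map_mxM; congr (_ - _).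
  by rewrite scalar_mxC -mulmxA PcVPc mulmx1.
by rewrite !det_mulmx mulrAC -det_mulmx PcVPc det1 mul1r.
Qed.

Lemma char_poly_scalar (F : fieldType) n (a : F) :
  char_poly (a%:M : 'M_n) = ('X - a%:P) ^+ n.
Proof.
rewrite char_poly_trig ?scalar_mx_is_trig //.
under eq_bigr do rewrite mxE eqxx.
by rewrite prodr_const card_ord.
Qed.

Lemma mup_char_poly_block_scalar (F : fieldType) p q (a : F) (C : 'M_q) :
  ~~ eigenvalue C a -> mup a (char_poly (block_mx (a%:M : 'M_p) 0 0 C)) = p.
Proof.
move=> Ca.
rewrite /char_poly char_block_diag_mx det_ublock -/(char_poly _) -/(char_poly _).
by rewrite mupMl -?eigenvalue_root_char // char_poly_scalar mup_XsubCX eqxx.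
Qed.

Lemma similar_block_of_kermx_cap0 (F : fieldType) p q (A : 'M[F]_(p + q)) a :
  \rank (kermx (A - a%:M)) = p -> (kermx (A - a%:M) :&: (A - a%:M) = 0)%MS ->
  exists2 P, P \in unitmx &
    exists2 C : 'M_q, ~~ eigenvalue C a & A = invmx P *m block_mx a%:M 0 0 C *m P.
Proof.
set B := A - a%:M => rkK capK.
have rkB : \rank B = q by have := mxrank_ker B; have := rank_leq_row B; lia.
pose K := castmx (rkK, erefl) (row_base (kermx B)) : 'M_(p, p + q).
pose I := castmx (rkB, erefl) (row_base B) : 'M_(q, p + q).
have eK : (K :=: kermx B)%MS := eqmx_trans (eqmx_cast _ _) (eq_row_base _).
have eI : (I :=: B)%MS := eqmx_trans (eqmx_cast _ _) (eq_row_base _).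
pose P := col_mx K I.
have Punit : P \in unitmx.
  rewrite -row_full_unit /row_full -(addsmxE K I).1.
  have := mxrank_sum_cap K I.
  by rewrite (cap_eqmx eK eI).1 capK mxrank0 eK.1 eI.1 rkK rkB addn0 => ->.
have KB : K *m B = 0 by apply/sub_kermxP; rewrite eK.
have [C0 IB] : exists C0, I *m B = C0 *m I.
  by apply/submxP; apply: submx_trans (submxMl I B) _; rewrite eI.
have C0_inj : ~~ eigenvalue C0 0.
  apply/eigenvalueP => -[v]; rewrite scale0r => vC0 vn0.
  have vI0 : v *m I == 0.
    rewrite -submx0 -capK sub_capmx -eI submxMl andbT.
    by apply/sub_kermxP; rewrite -mulmxA IB mulmxA vC0 mul0mx.
  have Ifree : row_free I by rewrite /row_free eI.1 rkB.
  by move: vI0; rewrite mulmx_free_eq0 // (negbTE vn0).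
exists P => //; exists (C0 + a%:M).
  apply: contra C0_inj => /eigenvalueP[v]; rewrite mulmxDr mul_mx_scalar.
  by rewrite -{2}(add0r (a *: v)) => /addIr vC0 vn0; apply/eigenvalueP; exists v; rewrite ?scale0r.
have PB : P *m B = block_mx 0 0 0 C0 *m P.
  by rewrite mul_col_mx KB IB /block_mx !mul_col_mx !mul_row_col !mul0mx !add0r.
rewrite [X in _ *m X *m _](_ : _ = block_mx 0 0 0 C0 + a%:M); last first.
  by rewrite [X in _ = _ + X]scalar_mx_block add_block_mx !add0r.
rewrite mulmxDr mulmxDl -mulmxA -PB mulmxA mulVmx // mul1mx.
by rewrite scalar_mxC mulmxKV // /B subrK.
Qed.

Lemma mup_char_poly_eq_rank_kermx (F : fieldType) m (A : 'M[F]_m) a :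
  (kermx (A - a%:M) :&: (A - a%:M) = 0)%MS ->
  mup a (char_poly A) = \rank (kermx (A - a%:M)).
Proof.
set p := \rank _; set q := \rank (A - a%:M).
have em : m = (p + q)%N by rewrite /p mxrank_ker; have := rank_leq_row (A - a%:M); lia.
(* Making p and q opaque lets us substitute p + q for m in the type of A. *)
move: (erefl p); rewrite {2}/p; clearbody p q; subst m => /esym rkK capK.
have [P Punit [C Ca ->]] := similar_block_of_kermx_cap0 rkK capK.
by rewrite char_poly_similar // mup_char_poly_block_scalar.
Qed.

(* For u = w B with u B = 0, the sum of squares u u^T = (u B) w^T vanishes. *)
Lemma symmetric_kermx_cap0 (R : realFieldType) n (B : 'M[R]_n) :
  B^T = B -> (kermx B :&: B = 0)%MS.
Proof.
move=> Bsym; apply/eqP; rewrite -submx0; apply/rV_subP => v.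
rewrite sub_capmx submx0 => /andP[/sub_kermxP vB /submxP[w def_v]].
subst v; set u := w *m B.
have : (u *m u^T) 0 0 = 0 by rewrite /u trmx_mul Bsym !mulmxA vB !mul0mx mxE.
have sq_ge0 k : 0 <= u 0 k * u^T k 0 by rewrite [u^T _ _]mxE -expr2 sqr_ge0.
rewrite mxE => /psumr_eq0P uu0; apply/eqP/rowP => j; rewrite mxE.
have /eqP := uu0 (fun k _ => sq_ge0 k) j isT.
by rewrite !mxE mulf_eq0 orbb => /eqP.
Qed.

Section ZeroLineSums.
Variables (F : fieldType) (n : nat) (L : 'M[F]_n) (a : F).
Hypotheses (L_const : L *m const_mx 1 = 0 :> 'M_n) (const_L : const_mx 1 *m L = 0 :> 'rV_n).
Hypotheses (a_neq0 : a != 0) (n_neq0 : n%:R != 0 :> F).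

Let M := L - a%:M + (a / n%:R) *: const_mx 1.

Lemma eigenspace_mul_const : eigenspace L a *m const_mx 1 = 0 :> 'M_n.
Proof.
have EL : eigenspace L a *m L = a *: eigenspace L a by apply/eigenspaceP.
have : a *: (eigenspace L a *m const_mx 1) = 0 :> 'M_n.
  by rewrite scalemxAl -EL -mulmxA L_const mulmx0.
by move/eqP; rewrite scaler_eq0 (negbTE a_neq0) => /eqP.
Qed.

Lemma eigenspace_sub_kermx_shift : (eigenspace L a <= kermx M)%MS.
Proof.
apply/sub_kermxP; rewrite mulmxDr -scalemxAr eigenspace_mul_const scaler0 addr0.
exact/sub_kermxP.
Qed.

Lemma const_sub_kermx_shift : ((const_mx 1 : 'rV[F]_n) <= kermx M)%MS.
Proof.
have const_const : (const_mx 1 : 'rV[F]_n) *m (const_mx 1 : 'M_n) = n%:R *: const_mx 1.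
  apply/rowP => j; rewrite !mxE; under eq_bigr do rewrite !mxE mulr1.
  by rewrite sumr_const card_ord mulr1.
apply/sub_kermxP; rewrite /M mulmxDr mulmxBr const_L mul_mx_scalar -scalemxAr.
by rewrite const_const scalerA mulfVK // sub0r addNr.
Qed.

Lemma const_notin_eigenspace : ~~ ((const_mx 1 : 'rV[F]_n) <= eigenspace L a)%MS.
Proof.
have n_gt0 : (0 < n)%N by case: n n_neq0 => [|[]] //; rewrite eqxx.
apply/negP => /eigenspaceP; rewrite const_L => /esym/eqP.
rewrite scaler_eq0 (negbTE a_neq0) /= => /eqP/rowP/(_ (Ordinal n_gt0)).
by rewrite !mxE => /eqP; rewrite oner_eq0.
Qed.

Lemma rank_shift_add_eigenspace_lt : (\rank M + \rank (eigenspace L a) < n)%N.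
Proof.
have lt_rank : (\rank (eigenspace L a) < \rank (eigenspace L a + (const_mx 1%R : 'rV[F]_n))%MS)%N.
  by rewrite rank_ltmx // ltmxE addsmxSl addsmx_sub submx_refl const_notin_eigenspace.
have sub_ker : (eigenspace L a + (const_mx 1 : 'rV[F]_n) <= kermx M)%MS.
  by rewrite addsmx_sub eigenspace_sub_kermx_shift const_sub_kermx_shift.
have := mxrankS sub_ker; have := mxrank_ker M; have := rank_leq_row M; lia.
Qed.

End ZeroLineSums.

Section Laplacian.
Variables (R : realType) (n : nat) (e : rel 'I_n).

Lemma mur_le_rank_univmx a b c d : a != 0 -> (mur R e <= \rank (@univmx R n e a b c d))%N.
Proof.
move=> a_neq0; rewrite /mur; case: ex_minnP => k _; apply; apply/asboolP.
by exists a, b, c, d.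
Qed.

Lemma univmx_laplacian_shift a c :
  @univmx R n e (-1) (- a) c 1 = laplacian R e - a%:M + c *: const_mx 1.
Proof. by rewrite /univmx /laplacian scaleN1r scale1r raddfN /= addrC !addrA. Qed.

Lemma laplacian_mul_const p : laplacian R e *m const_mx 1 = 0 :> 'M_(n, p).
Proof.
apply/matrixP => i j; rewrite !mxE.
under eq_bigr do rewrite [const_mx 1 _ _]mxE mulr1 !mxE.
rewrite sumrB (bigD1 i) //= eqxx mul1r big1 ?addr0; last first.
  by move=> k; rewrite eq_sym => /negbTE ->; rewrite mul0r.
by rewrite -natr_sum /deg -sum1_card big_mkcond subrr.
Qed.

Lemma laplacian_sym : symmetric e -> (laplacian R e)^T = laplacian R e.
Proof.
move=> e_sym; apply/matrixP => i j; rewrite !mxE.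
by case: (eqVneq i j) => [->|_] //; rewrite !mul0r e_sym.
Qed.

Lemma const_mul_laplacian : symmetric e -> const_mx 1 *m laplacian R e = 0 :> 'rV_n.
Proof.
move=> e_sym; apply: trmx_inj.
by rewrite trmx_mul laplacian_sym // !trmx_const laplacian_mul_const.
Qed.

End Laplacian.

Theorem theorem4 (R : realType) (n : nat) (e : rel 'I_n) :
  simple_graph e -> connected_graph e ->
  forall lam : R, lam != 0 -> eigenvalue (laplacian R e) lam ->
  ((mur R e + mup lam (char_poly (laplacian R e))).+1 <= n)%N.
Proof.
move=> [_ e_sym] _ lam lam_neq0 /eigenvalueP[v _ v_neq0].
have n_neq0 : n%:R != 0 :> R.
  by rewrite pnatr_eq0 -lt0n (leq_trans _ (rank_leq_col v)) // lt0n mxrank_eq0.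
have Lsym_shift : (laplacian R e - lam%:M)^T = laplacian R e - lam%:M.
  by rewrite linearB /= tr_scalar_mx laplacian_sym.
rewrite mup_char_poly_eq_rank_kermx ?symmetric_kermx_cap0 // -/(eigenspace _ _).
have := rank_shift_add_eigenspace_lt (laplacian_mul_const _ _ _)
  (const_mul_laplacian R e_sym) lam_neq0 n_neq0.
apply: leq_trans.
by rewrite ltnS leq_add2r -univmx_laplacian_shift mur_le_rank_univmx ?oppr_eq0 ?oner_eq0.
Qed.
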